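(* There exists a function $g:(0,\infty)\to(0,\infty)$ such that for every $\varepsilon>0$ and all integers $n\ge 1$ and $k\ge 0$ there exists a tournament tree $T$ with exactly $n$ distinct seed position names and of height at most $\lceil (1+\varepsilon)\log_2 n\rceil+g(\varepsilon^{-1})\cdot k$ that is robust for $(n,k)$.
   Context: A tournament tree is a rooted full binary tree (every internal vertex has exactly two children) whose leaves are labeled with binary strings (seed position names); different leaves may share a name. Height is the maximum number of edges on a root-to-leaf path. A winner function on a player set $N$ is $w:N\times N\to N$ with $w(i,j)\in\{i,j\}$; it exhibits a strongest player $i_w$ if $w(i_w,j)=w(j,i_w)=i_w$ for all $j\in N$. A seeding is a bijection $\sigma$ from $N$ onto the set of seed position names. Conduction of $(N,T,w,\sigma)$: each leaf named $x$ is occupied by $\sigma^{-1}(x)$; at each internal vertex $v$ with children occupied by $i,j$, one of $i,j$ is promoted to $v$, normally $w(i,j)$; the game at $v$ is manipulated if the other one is promoted. The player at the root wins. $T$ is robust for $(n,k)$ if for every set $N$ of $n$ players, every winner function $w$ on $N$ exhibiting a strongest player $i_w$, and every seeding $\sigma$, the player $i_w$ wins $(N,T,w,\sigma)$ whenever every leaf-to-root path of $T$ contains at most $k$ vertices whose game is manipulated. *)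

From mathcomp Require Import all_boot.
From Stdlib Require Import Reals.

Set Implicit Arguments.
Unset Strict Implicit.
Unset Printing Implicit Defensive.

(* Tournament trees: rooted full binary trees with leaves labelled by
   binary strings (seed position names). *)
Inductive ttree : Type :=
| Leaf of seq bool
| Node of ttree & ttree.

Fixpoint height (t : ttree) : nat :=
  match t with
  | Leaf _ => 0
  | Node l r => (maxn (height l) (height r)).+1
  end.

Fixpoint leaves (t : ttree) : seq (seq bool) :=
  match t with
  | Leaf x => [:: x]
  | Node l r => leaves l ++ leaves r
  end.

Definition names (t : ttree) : seq (seq bool) := undup (leaves t).

Section Conduction.
Variable N : finType.

Definition winner_fun (w : N -> N -> N) : Prop :=
  forall i j, w i j = i \/ w i j = j.

Definition strongest (w : N -> N -> N) (iw : N) : Prop :=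
  forall j, w iw j = iw /\ w j iw = iw.

Definition seeding (t : ttree) (sigma : N -> seq bool) : Prop :=
  injective sigma /\ (forall i, sigma i \in names t) /\
  (forall x, x \in names t -> exists i, sigma i = x).

(* Vertices of a tree are addressed by their path from the root
   (false = left child, true = right child).  A manipulation pattern
   M says for each internal vertex whether its game is manipulated. *)

(* Conduction: [d] is a default player, only used for labels outside
   the names of the tree (never happens when sigma is a seeding). *)
Fixpoint conduct (w : N -> N -> N) (sigma : N -> seq bool) (d : N)
    (M : seq bool -> bool) (pos : seq bool) (t : ttree) : N :=
  match t with
  | Leaf x => odflt d [pick i | sigma i == x]
  | Node l r =>
      let i := conduct w sigma d M (rcons pos false) l in
      let j := conduct w sigma d M (rcons pos true) r in
      if M pos then (if w i j == i then j else i) else w i j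
  end.

Fixpoint max_manip (M : seq bool -> bool) (pos : seq bool) (t : ttree) : nat :=
  match t with
  | Leaf _ => 0
  | Node l r =>
      M pos + maxn (max_manip M (rcons pos false) l)
                   (max_manip M (rcons pos true) r)
  end.

End Conduction.

Definition robust (n k : nat) (t : ttree) : Prop :=
  forall (N : finType), #|N| = n ->
  forall (w : N -> N -> N), winner_fun w ->
  forall iw : N, strongest w iw ->
  forall sigma : N -> seq bool, seeding t sigma ->
  forall M : seq bool -> bool, max_manip M [::] t <= k ->
  conduct w sigma iw M [::] t = iw.

Definition log2 (x : R) : R := (ln x / ln 2)%R.
(* ceiling: ceil x = - floor (- x), floor y = up y - 1 *)
Definition ceilR (x : R) : Z := (- (up (- x) - 1))%Z.

From Stdlib Require Import Reals Lra ZArith.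
From mathcomp Require Import all_boot zify.

(* Take n binary words of length h pairwise at Hamming distance more than 2k,
   and label the leaf at address p of the complete binary tree of height h by
   the codeword within distance k of p (unique by the triangle inequality).
   If the strongest player is seeded at x, then it wins every subtree whose
   address p satisfies d(p, x|p) + (manipulations on a path below) <= k: after
   an honest game it comes from the child that follows x, and a manipulated
   game uses up one manipulation on both sides.  Such codes exist greedily
   (Gilbert-Varshamov) once n times the volume V(h, 2k) of a Hamming ball is at
   most 2^h; the estimate V(h, r) <= 2^((a+1) r + h/2^a + 1) shows that
   h = log n + (log n)/D + 3(D+3)k suffices for any D > 1/eps. *)

Set Implicit Arguments.
Unset Strict Implicit.
Unset Printing Implicit Defensive.

Section Hamming.
Variable T : eqType.
Implicit Types u v w : seq T.

(* Only the common prefix is compared: [hamming x p] is the distance from [p]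
   to the prefix of [x] of the same length. *)
Fixpoint hamming u v : nat :=
  match u, v with
  | a :: u', b :: v' => (a != b) + hamming u' v'
  | _, _ => 0
  end.

Lemma hammingC u v : hamming u v = hamming v u.
Proof. by elim: u v => [|a u IH] [|b v] //=; rewrite IH eq_sym. Qed.

Lemma hammingxx u : hamming u u = 0.
Proof. by elim: u => //= a u ->; rewrite eqxx. Qed.

Lemma hamming_nilr u : hamming u [::] = 0.
Proof. by case: u. Qed.

Lemma hamming_triangle u v w : size u = size v -> size v = size w ->
  hamming u w <= hamming u v + hamming v w.
Proof.
elim: u v w => [|a u IH] [|b v] [|c w] //= [Huv] [Hvw].
rewrite addnACA leq_add ?IH //.
by case: (eqVneq a b) => [->|]; case: (a != c); rewrite ?leq_addl.
Qed.

Lemma hamming_rcons x0 u v b : size v < size u ->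
  hamming u (rcons v b) = hamming u v + (nth x0 u (size v) != b).
Proof.
elim: u v => [|a u IH] [|c v] //= Hs; first by rewrite hamming_nilr addn0.
by rewrite IH // addnA.
Qed.

End Hamming.

Fixpoint bitstrings (h : nat) : seq (seq bool) :=
  if h is h'.+1 then map (cons false) (bitstrings h') ++ map (cons true) (bitstrings h')
  else [:: [::]].

Lemma size_bitstrings h : size (bitstrings h) = 2 ^ h.
Proof. by elim: h => //= h IH; rewrite size_cat !size_map IH expnS mul2n addnn. Qed.

Lemma mem_bitstrings h w : (w \in bitstrings h) = (size w == h).
Proof.
have cons_inj b : injective (cons b) by move=> u v [].
elim: h w => [|h IH] [|b w] //=; rewrite mem_cat.
  by apply/negbTE; rewrite negb_or; apply/andP; split; apply/mapP => -[].
have notin b' : b != b' -> (b :: w \in map (cons b') (bitstrings h)) = false.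
  by move=> neq; apply/mapP => -[v _ [eqb _]]; rewrite eqb eqxx in neq.
by case: b notin => notin; rewrite (mem_map (cons_inj _ _)) notin ?orbF ?IH.
Qed.

(* [ball_volume h r] is [\sum_(i <= r) 'C(h, i)], in Pascal-recursive form. *)
Fixpoint ball_volume (h r : nat) : nat :=
  if h is h'.+1 then ball_volume h' r + (if r is r'.+1 then ball_volume h' r' else 0)
  else 1.

Lemma ball_volume0 h : ball_volume h 0 = 1.
Proof. by elim: h => //= h ->. Qed.

Lemma ball_volume_gt0 h r : 0 < ball_volume h r.
Proof. by elim: h r => //= h IH r; rewrite ltn_addr. Qed.

Lemma count_hamming_ball h r c : size c = h ->
  count (fun w => hamming c w <= r) (bitstrings h) <= ball_volume h r.
Proof.
elim: h c r => [|h IH] [|b c] r //= [Hc].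
rewrite count_cat !count_map.
have far : count (fun w => 1 + hamming c w <= r) (bitstrings h)
           <= (if r is r'.+1 then ball_volume h r' else 0).
  case: r => [|r]; first by rewrite count_pred0.
  by rewrite (eq_count (a2 := fun w => hamming c w <= r)) ?IH.
by case: b; [rewrite addnC|]; exact: leq_add (IH _ _ Hc) far.
Qed.

Lemma count_has_le_sum (T1 T2 : Type) (P : T1 -> pred T2) (cs : seq T1) (s : seq T2) :
  count (fun w => has (P^~ w) cs) s <= \sum_(c <- cs) count (P c) s.
Proof.
elim: cs => [|c cs IH]; first by rewrite big_nil count_pred0.
rewrite big_cons; apply: leq_trans (leq_add (leqnn _) IH).
by rewrite -count_predUI leq_addr.
Qed.

Lemma exists_far_word h r (cs : seq (seq bool)) :
  {in cs, forall c, size c = h} -> size cs * ball_volume h r < 2 ^ h ->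
  exists2 w, size w = h & {in cs, forall c, r < hamming c w}.
Proof.
move=> Hsize Hvol.
pose near w := has (fun c => hamming c w <= r) cs.
have : count near (bitstrings h) < size (bitstrings h).
  rewrite size_bitstrings; apply: leq_ltn_trans Hvol.
  apply: leq_trans (count_has_le_sum _ _ _) _.
  rewrite big_seq (@leq_trans (\sum_(c <- cs | c \in cs) ball_volume h r)) //.
    by apply: leq_sum => c /Hsize; apply: count_hamming_ball.
  by rewrite -big_seq big_const_seq count_predT iter_addn_0 mulnC.
rewrite -(count_predC near) -ltn_subLR // subnn -has_count => /hasP [w].
rewrite mem_bitstrings => /eqP Hw /hasPn Hfar.
by exists w => // c /Hfar; rewrite -ltnNge.
Qed.

Definition separated (h r : nat) (cs : seq (seq bool)) : Prop :=
  [/\ uniq cs, {in cs, forall c, size c = h} &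
      {in cs &, forall c c', c != c' -> r < hamming c c'}].

Lemma exists_separated_code h r n : n * ball_volume h r <= 2 ^ h ->
  exists2 cs, size cs = n & separated h r cs.
Proof.
elim: n => [|n IH] Hvol; first by exists [::].
have [cs size_cs [uniq_cs Hsize Hsep]] := IH (leq_trans (leq_mul (leqnSn n) (leqnn _)) Hvol).
have [|w Hw Hfar] := @exists_far_word h r cs Hsize.
  by rewrite size_cs; apply: leq_trans Hvol; rewrite ltn_pmul2r ?ball_volume_gt0.
exists (w :: cs); first by rewrite /= size_cs.
split.
- by rewrite /= uniq_cs andbT; apply/negP => /Hfar; rewrite hammingxx.
- by move=> c; rewrite inE => /predU1P [->|/Hsize].
- move=> c c'; rewrite !inE => /predU1P [->|Hc] /predU1P [->|Hc']; rewrite ?eqxx // => Hne.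
  + by rewrite hammingC; apply: Hfar.
  + exact: Hfar.
  + exact: Hsep.
Qed.

Section Decoding.
Variables (cs : seq (seq bool)) (k h : nat).
Hypothesis cs_separated : separated h k.*2 cs.

(* Words far from every codeword are sent to the first one, so that every
   label is a codeword. *)
Definition decode (p : seq bool) : seq bool :=
  head (head [::] cs) [seq c <- cs | hamming c p <= k].

Lemma decode_mem p : cs != [::] -> decode p \in cs.
Proof.
rewrite /decode; case E: [seq c <- cs | _] => [|c s] /=.
  by case: (cs) => // c s _; rewrite mem_head.
by move=> _; have := mem_head c s; rewrite -E mem_filter => /andP [].
Qed.

Lemma decode_near c p : c \in cs -> size p = h -> hamming c p <= k -> decode p = c.
Proof.
move=> Hc Hp Hcp; have [_ Hsize Hsep] := cs_separated.
have : c \in [seq c <- cs | hamming c p <= k] by rewrite mem_filter Hcp.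
rewrite /decode; case E: [seq c <- cs | _] => [|c' s] // _.
have /andP [Hc'p Hc'] : (hamming c' p <= k) && (c' \in cs).
  by rewrite -(mem_filter (fun c => hamming c p <= k)) E mem_head.
case: (eqVneq c' c) => [-> //|Hne]; exfalso.
have := Hsep _ _ Hc' Hc Hne.
have := hamming_triangle (etrans (Hsize _ Hc') (esym Hp)) (etrans Hp (esym (Hsize _ Hc))).
rewrite (hammingC p c); lia.
Qed.

End Decoding.

Fixpoint complete_tree (lab : seq bool -> seq bool) (t : nat) (p : seq bool) : ttree :=
  if t is t'.+1 then
    Node (complete_tree lab t' (rcons p false)) (complete_tree lab t' (rcons p true))
  else Leaf (lab p).

Lemma height_complete_tree lab t p : height (complete_tree lab t p) = t.
Proof. by elim: t p => //= t IH p; rewrite !IH maxnn. Qed.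

Lemma leaves_complete_treeP lab t p x :
  reflect (exists2 q, size q = t & x = lab (p ++ q)) (x \in leaves (complete_tree lab t p)).
Proof.
elim: t p => [|t IH] p /=.
  rewrite inE; apply: (iffP eqP) => [->|[q /size0nil -> ->]]; last by rewrite cats0.
  by exists [::]; rewrite ?cats0.
rewrite mem_cat; apply: (iffP orP) => [[] /IH [q Hq ->] | [[|b q] //= [Hq] Ex]].
- by exists (false :: q); rewrite /= ?Hq // -cat_rcons.
- by exists (true :: q); rewrite /= ?Hq // -cat_rcons.
- by case: b Ex => Ex; [right|left]; apply/IH; exists q; rewrite // Ex cat_rcons.
Qed.

Section Robustness.
Variables (N : finType) (w : N -> N -> N) (iw : N) (sigma : N -> seq bool).
Variables (lab : seq bool -> seq bool) (k : nat).
Hypothesis iw_strongest : strongest w iw.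
Hypothesis sigma_inj_iw : forall i, sigma i = sigma iw -> i = iw.
Hypothesis lab_decodes :
  forall p, size p = size (sigma iw) -> hamming (sigma iw) p <= k -> lab p = sigma iw.

Lemma conduct_complete_tree M t p : size p + t = size (sigma iw) ->
  hamming (sigma iw) p + max_manip M p (complete_tree lab t p) <= k ->
  conduct w sigma iw M p (complete_tree lab t p) = iw.
Proof.
elim: t p => [|t IH] p Hsize /=.
  rewrite addn0 in Hsize; rewrite addn0 => /(lab_decodes Hsize) ->.
  by case: pickP => [i /eqP /sigma_inj_iw|].
set x := sigma iw in Hsize IH *.
have Hp : size p < size x by rewrite -Hsize addnS ltnS leq_addr.
have win b : hamming x p + (nth false x (size p) != b)
             + max_manip M (rcons p b) (complete_tree lab t (rcons p b)) <= k ->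
             conduct w sigma iw M (rcons p b) (complete_tree lab t (rcons p b)) = iw.
  by move=> Hb; apply: IH; rewrite ?size_rcons ?addSnnS // (hamming_rcons false).
case: (M p) => /= Hk.
- rewrite !win //; [by case: ifP | |]; apply: leq_trans Hk;
    by rewrite -addnA leq_add2l leq_add ?leq_b1 ?leq_maxl ?leq_maxr.
- case: (nth false x (size p)) (win (nth false x (size p))) => /= Hwin;
    rewrite addn0 in Hwin.
  + by rewrite Hwin; [exact: (iw_strongest _).2 | lia].
  + by rewrite Hwin; [exact: (iw_strongest _).1 | lia].
Qed.

End Robustness.

Lemma robust_code_tree h k cs : separated h k.*2 cs -> cs != [::] ->
  exists T, [/\ size (names T) = size cs, height T = h & robust (size cs) k T].
Proof.
move=> cs_sep cs0; have [cs_uniq cs_size _] := cs_sep.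
pose T := complete_tree (decode cs k) h [::].
have namesT : names T =i cs.
  move=> x; rewrite mem_undup; apply/leaves_complete_treeP/idP => [[q _ ->]|Hx].
    exact: decode_mem.
  by exists x; rewrite ?cs_size // (decode_near cs_sep Hx) ?hammingxx ?cs_size.
exists T; split.
- by apply/perm_size/uniq_perm; rewrite ?undup_uniq.
- exact: height_complete_tree.
move=> N _ w _ iw iw_strongest sigma [sigma_inj [sigma_names _]] M HM.
have x_cs : sigma iw \in cs by rewrite -namesT.
apply: (conduct_complete_tree (k := k)) => //.
- by move=> i /sigma_inj.
- by move=> p Hp; apply: (decode_near cs_sep); rewrite // -(cs_size _ x_cs).
- by rewrite (cs_size _ x_cs).
- by rewrite hamming_nilr.
Qed.

Lemma ball_volume_le B h r : 0 < B -> ball_volume h r * B ^ h <= B ^ r * B.+1 ^ h.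
Proof.
move=> B0; elim: h r => [|h IH] r /=; first by rewrite !muln1 expn_gt0 B0.
rewrite !expnS; case: r => [|r].
  by have := leq_mul (leqnSn B) (IH 0); rewrite addn0; lia.
have := leq_add (leq_mul (leqnn B) (IH r.+1)) (leq_mul (leqnn B) (IH r)).
by rewrite expnS; lia.
Qed.

Lemma expnS_mul_subn_le B j : j <= B -> B.+1 ^ j * (B - j) <= B ^ j.+1.
Proof.
elim: j => [|j IH] lt_jB; first by rewrite mul1n subn0 expn1.
have step : B.+1 * (B - j.+1) <= B * (B - j) by nia.
rewrite expnS [B.+1 * _]mulnC -mulnA; apply: leq_trans (leq_mul (leqnn _) step) _.
by rewrite mulnCA [B ^ j.+2]expnS leq_mul2l IH ?orbT // ltnW.
Qed.

Lemma expnS_le_double B j : j.*2 <= B -> B.+1 ^ j <= (B ^ j).*2.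
Proof.
move=> le_2jB; have le_jB : j <= B by rewrite (leq_trans _ le_2jB) // -addnn leq_addr.
have := expnS_mul_subn_le le_jB; rewrite expnS => le_sub.
case: (posnP B) => [B0|B0]; first by move: le_2jB; rewrite B0 leqn0 double_eq0 => /eqP ->.
rewrite -(leq_pmul2r B0); apply: (@leq_trans (B.+1 ^ j * (B - j)).*2).
  by rewrite -mul2n mulnCA leq_mul2l; apply/orP; right; lia.
by rewrite -doubleMl leq_double (mulnC (B ^ j)).
Qed.

Lemma expnS_le_pow2 B J q r : 0 < J -> J.*2 <= B -> r <= J ->
  B.+1 ^ (q * J + r) <= 2 ^ q.+1 * B ^ (q * J + r).
Proof.
move=> J0 JB rJ; elim: q => [|q IH].
  by rewrite mul0n add0n expn1 mul2n expnS_le_double // (leq_trans _ JB) // leq_double.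
rewrite mulSn -addnA expnD [B ^ (J + _)]expnD [2 ^ q.+2]expnS mulnACA.
by apply: leq_mul IH; rewrite mul2n expnS_le_double.
Qed.

Lemma ball_volume_le_exp2 a h r : ball_volume h r <= 2 ^ (a.+1 * r + (h %/ 2 ^ a).+1).
Proof.
set J := 2 ^ a; have J0 : 0 < J := expn_gt0 2 a.
have B0 : 0 < 2 ^ a.+1 := expn_gt0 2 a.+1.
have JB : J.*2 <= 2 ^ a.+1 by rewrite expnS mul2n.
have := expnS_le_pow2 (h %/ J) J0 JB (ltnW (ltn_pmod h J0)); rewrite -divn_eq => le_block.
have Bh0 : 0 < (2 ^ a.+1) ^ h by rewrite expn_gt0 B0.
rewrite -(leq_pmul2r Bh0); apply: leq_trans (ball_volume_le h r B0) _.
by rewrite expnD expnM -mulnA leq_mul2l le_block orbT.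
Qed.

Lemma ball_volume_code_bound D L k : 0 < D ->
  ball_volume (L + (L - 1) %/ D + 3 * (D + 3) * k) k.*2
    <= 2 ^ ((L - 1) %/ D + 3 * (D + 3) * k).
Proof.
move=> D0; set m := (L - 1) %/ D; set h := L + m + _.
case: (posnP k) => [->|k0]; first by rewrite ball_volume0 expn_gt0.
apply: leq_trans (ball_volume_le_exp2 (D + 2) h k.*2) _; rewrite leq_exp2l //.
set q := h %/ 2 ^ (D + 2).
(* Since 2 ^ (D + 2) >= 4 (D + 1), the term h %/ 2 ^ (D + 2) is at most a
   quarter of m + 3 (D + 3) k. *)
have J_ge : 4 * D.+1 <= 2 ^ (D + 2) by rewrite expnD (mulnC (2 ^ D)) leq_mul2l /= ltn_expl.
have qJ : q * (4 * D.+1) <= h := leq_trans (leq_mul (leqnn q) J_ge) (leq_divM h _).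
have L_le : L <= m.+1 * D by have := ltn_ceil (L - 1) D0; lia.
have q_le : 4 * q <= m + 3 * (D + 3) * k.
  by rewrite -ltnS -(ltn_pmul2l (ltn0Sn D)); nia.
have Dk : 0 < D * k by rewrite muln_gt0 D0.
lia.
Qed.

Lemma exists_robust_tree D n k : 0 < D -> 0 < n ->
  exists T, [/\ size (names T) = n,
    height T = up_log 2 n + (up_log 2 n - 1) %/ D + 3 * (D + 3) * k & robust n k T].
Proof.
move=> D0 n0; set h := _ + _ + _.
have [cs size_cs cs_sep] : exists2 cs, size cs = n & separated h k.*2 cs.
  apply: exists_separated_code; rewrite {2}/h -addnA expnD.
  exact: leq_mul (up_logP n (ltnSn 1)) (ball_volume_code_bound _ _ D0).
have cs0 : cs != [::] by rewrite -size_eq0 size_cs -lt0n.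
by have [T [namesT heightT robustT]] := robust_code_tree cs_sep cs0; exists T; rewrite -size_cs.
Qed.

Open Scope R_scope.

Lemma INR_expn (m j : nat) : INR (m ^ j)%N = INR m ^ j.
Proof. by elim: j => //= j IH; rewrite expnS mult_INR IH. Qed.

Lemma up_log_lt_log2_add1 (n : nat) : (1 <= n)%N -> INR (up_log 2 n) - 1 < log2 (INR n).
Proof.
move=> n1; have ln2_pos : 0 < ln 2 by have := ln_lt_2; lra.
case: (ltnP 1 n) => [n_gt1|n_le1]; last first.
  have -> : n = 1%N by apply/eqP; rewrite eqn_leq n_le1 n1.
  by rewrite up_log1 /log2 /= ln_1 /Rdiv Rmult_0_l; lra.
have INR2 : INR 2 = 2 by simpl; lra.
have L_pos : (0 < up_log 2 n)%N by rewrite up_log_gt0 n_gt1.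
have lt_pow : 2 ^ (up_log 2 n).-1 < INR n.
  by rewrite -INR2 -INR_expn; apply/lt_INR/ltP/up_log_gtn.
have := ln_increasing _ _ (pow_lt 2 _ Rlt_0_2) lt_pow.
rewrite ln_pow; last lra.
rewrite -{2}(prednK L_pos) S_INR => lt_ln.
rewrite /log2 /Rdiv; apply: (Rmult_lt_reg_r (ln 2)) => //.
by rewrite Rmult_assoc Rinv_l; lra.
Qed.

Lemma log2_ge0 (n : nat) : (1 <= n)%N -> 0 <= log2 (INR n).
Proof.
move=> n1; rewrite /log2 /Rdiv; apply: Rle_mult_inv_pos; last by have := ln_lt_2; lra.
case: (ltnP 1 n) => [n_gt1|n_le1].
  by rewrite -ln_1; apply/Rlt_le/ln_increasing; [lra | apply/(lt_INR 1)/ltP].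
have -> : n = 1%N by apply/eqP; rewrite eqn_leq n_le1 n1.
by rewrite ln_1; lra.
Qed.

Lemma le_ceilR y (z : Z) : IZR z - 1 < y -> IZR z <= IZR (ceilR y).
Proof.
move=> lt_y; have [_ up_le] := archimed (- y).
have lt_z : (z - 1 < ceilR y)%Z.
  by apply: lt_IZR; rewrite /ceilR opp_IZR !minus_IZR; lra.
by apply: IZR_le; lia.
Qed.

Lemma up_log_add_le_ceilR eps (n m D : nat) : 0 < eps -> 1 <= eps * INR D ->
  (1 <= n)%N -> (m * D <= up_log 2 n - 1)%N ->
  INR (up_log 2 n + m) <= IZR (ceilR ((1 + eps) * log2 (INR n))).
Proof.
move=> eps0 epsD n1 mD.
have lt_log := up_log_lt_log2_add1 n1.
have le_log : INR (up_log 2 n - 1) <= log2 (INR n).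
  case: (posnP (up_log 2 n)) => [->|L0]; first exact: log2_ge0.
  by rewrite minus_INR ?INR_1; [lra | apply/leP].
have m_le : INR m <= eps * log2 (INR n).
  have mD_R : INR m * INR D <= INR (up_log 2 n - 1) by rewrite -mult_INR; apply/le_INR/leP.
  apply: (Rle_trans _ (eps * (INR m * INR D))); first by have := pos_INR m; nra.
  by apply: Rmult_le_compat_l; lra.
by rewrite INR_IZR_INZ; apply: le_ceilR; rewrite -INR_IZR_INZ plus_INR; nra.
Qed.

Theorem corollary14 :
  exists g : R -> R, (forall x, 0 < x -> 0 < g x) /\
  forall eps : R, 0 < eps ->
  forall n k : nat, (1 <= n)%nat ->
  exists T : ttree,
    size (names T) = n /\
    INR (height T) <= IZR (ceilR ((1 + eps) * log2 (INR n))) + g (/ eps) * INR k /\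
    robust n k T.
Proof.
exists (fun x => 3 * (IZR (up x) + 3)); split.
  by move=> x x0; have [] := archimed x; lra.
move=> eps eps0 n k n1.
have inv_pos : 0 < / eps by apply: Rinv_0_lt_compat.
have [up_gt _] := archimed (/ eps).
set D := Z.to_nat (up (/ eps)).
have DR : INR D = IZR (up (/ eps)).
  by rewrite INR_IZR_INZ Z2Nat.id //; apply: le_IZR; lra.
have D0 : (0 < D)%N by apply/ltP/INR_lt; rewrite DR /=; lra.
have epsD : 1 <= eps * INR D.
  by rewrite DR -(Rinv_r eps); [apply: Rmult_le_compat_l; lra | lra].
have [T [namesT heightT robustT]] := exists_robust_tree k D0 n1.
exists T; split => //; split => //.
have := up_log_add_le_ceilR eps0 epsD n1 (leq_divM (up_log 2 n - 1) D).
have INR3 : INR 3 = 3 by simpl; lra.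
by rewrite heightT !plus_INR !mult_INR !plus_INR INR3 -DR; lra.
Qed.
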